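(* In the setting where $\mathcal{H}$ is finite-dimensional with Hamiltonian $H$, $p_1,\dots,p_k\ge0$ sum to $1$, $\rho_1,\dots,\rho_k$ are density operators, $\rho^N:=\rho_1^{\otimes(N-\sum_{i\ge2}\lfloor p_iN\rfloor)}\otimes\bigotimes_{i\ge2}\rho_i^{\otimes\lfloor p_iN\rfloor}$ and $H_N=\sum_{j=1}^Nh_j$ with $h_j$ equal to $H$ on the $j$-th factor, assume there exists $\beta\in(0,\infty)$ with $S_{\mathrm{vN}}(\rho_\beta)=\sum_ip_iS_{\mathrm{vN}}(\rho_i)$, where $\rho_\beta=e^{-\beta H}/\mathrm{tr}[e^{-\beta H}]$. Then $$\liminf_{N\to\infty}\frac1N\min_U\mathrm{tr}\big[H_N U\rho^NU^\dagger\big]\ \ge\ \mathrm{tr}[H\rho_\beta].$$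
   Context: $S_{\mathrm{vN}}(\sigma)=-\mathrm{tr}[\sigma\ln\sigma]$ is the von Neumann entropy; the minimum is over all unitaries on $\mathcal{H}^{\otimes N}$; $\rho_i^{\otimes 0}$ means no factor. *)

From HB Require Import structures.
From mathcomp Require Import all_boot all_order all_algebra.
From mathcomp Require Import sesquilinear spectral.
From mathcomp Require Import complex mxtens.
From mathcomp Require Import classical_sets reals constructive_ereal ereal
  topology normedtype sequences exp.

Set Implicit Arguments.
Unset Strict Implicit.
Unset Printing Implicit Defensive.

Import Order.TTheory GRing.Theory Num.Theory.
Local Open Scope ring_scope.
Local Open Scope sesquilinear_scope.

Section Quantum.
Variable R : realType.
Local Notation C := R[i].

Definition psdmx n (A : 'M[C]_n) : Prop :=
  A \is hermsymmx /\ forall v : 'rV[C]_n, 0 <= (v *m A *m v ^t*) ord0 ord0.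

Definition density n (A : 'M[C]_n) : Prop := psdmx A /\ \tr A = 1.

(* functional calculus f(A) for a Hermitian (normal) matrix A, through the
   spectral decomposition A = P^-1 diag(lambda) P of spectral.v,
   with f applied to the (real) eigenvalues *)
Definition mxfun (f : R -> R) n (A : 'M[C]_n) : 'M[C]_n :=
  invmx (spectralmx A) *m
  diag_mx (map_mx (fun z : C => (f (complex.Re z))%:C%C) (spectral_diag A))
  *m spectralmx A.

Definition vN_entropy n (s : 'M[C]_n) : R :=
  - complex.Re (\tr (s *m mxfun (@ln R) s)).

Definition gibbs (beta : R) n (H : 'M[C]_n) : 'M[C]_n :=
  let E := mxfun (fun x => @expR R (- beta * x)) H in (\tr E)^-1 *: E.

Fixpoint tens d (M : nat) (F : nat -> 'M[C]_d) : 'M[C]_(d ^ M) :=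
  match M with
  | 0 => 1%:M
  | M'.+1 => castmx (esym (expnS d M'), esym (expnS d M'))
                    (F 0%N *t tens M' (fun i => F i.+1))
  end.

Definition local_ham d (N : nat) (H : 'M[C]_d) : 'M[C]_(d ^ N) :=
  \sum_(j < N) tens N (fun i => if i == j then H else 1%:M).

(* number of copies of rho_i in rho^N (0-based index i : 'I_k):
   first block N - sum_{i>=1} floor(p_i N), other blocks floor(p_i N) *)
Definition ncopies k (p : 'I_k -> R) (N : nat) (i : 'I_k) : nat :=
  if val i == 0%N then (N - \sum_(l < k | (0 < val l)%N) Num.truncn (p l * N%:R))%N
  else Num.truncn (p i * N%:R).

Definition factor_seq d k (p : 'I_k -> R) (rho : 'I_k -> 'M[C]_d) (N : nat)
  : seq 'M[C]_d :=
  flatten [seq nseq (ncopies p N i) (rho i) | i <- enum 'I_k].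

Definition rhoN d k (p : 'I_k -> R) (rho : 'I_k -> 'M[C]_d) (N : nat)
  : 'M[C]_(d ^ N) :=
  tens N (fun j => nth 0 (factor_seq p rho N) j).

(* energy tr[H_N U rho U^dagger] (real part; it is real) *)
Definition energy n (Hn rho U : 'M[C]_n) : R :=
  complex.Re (\tr (Hn *m (U *m rho *m U ^t*))).

(* min over unitaries U of tr[H_N U rho^N U^dagger] (the min is attained,
   so it equals this infimum) *)
Definition passive_energy n (Hn rho : 'M[C]_n) : R :=
  inf [set energy Hn rho U | U in [set U : 'M[C]_n | U \is unitarymx]].

End Quantum.

(* For every unitary U, Gibbs' variational principle bounds
   beta tr[H_N U rho^N U^dagger] from below by S(rho^N) - ln tr e^{-beta H_N}:
   in eigenbases of H_N and rho^N the energy is sum_{p,q} e_p t_q |M_pq|^2 with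
   M unitary, the matrix |M_pq|^2 is bistochastic, and Jensen's inequality
   reduces the claim to the classical finite Gibbs inequality.  Since H_N is a
   sum of one-site terms, ln tr e^{-beta H_N} = N ln Z, and since entropy is
   additive under tensor products,
   S(rho^N) = sum_i n_i S(rho_i) >= N sum_i p_i S(rho_i) - sum_i S(rho_i)
            = N S(rho_beta) - sum_i S(rho_i).
   Together with beta tr[H rho_beta] = S(rho_beta) - ln Z this gives
   (1/N) min_U tr[H_N U rho^N U^dagger] >= tr[H rho_beta] - sum_i S(rho_i) / (beta N). *)

From HB Require Import structures.
From mathcomp Require Import all_boot all_order all_algebra.
From mathcomp Require Import sesquilinear spectral.
From mathcomp Require Import complex mxtens.
From mathcomp Require Import classical_sets reals constructive_ereal ereal
  topology normedtype sequences exp.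
From mathcomp Require Import ring lra.

Set Implicit Arguments.
Unset Strict Implicit.

Import Order.TTheory GRing.Theory Num.Theory.
Local Open Scope ring_scope.
Local Open Scope sesquilinear_scope.

Section Distributions.
Variable R : realType.

Definition probvec n (t : 'I_n -> R) : Prop :=
  (forall q, 0 <= t q) /\ \sum_q t q = 1.

Definition shannon n (t : 'I_n -> R) : R := - \sum_q t q * ln (t q).

Definition log_partition n (b : R) (a : 'I_n -> R) : R :=
  ln (\sum_p expR (- b * a p)).

Definition bistochastic n (P : 'I_n -> 'I_n -> R) : Prop :=
  [/\ forall p q, 0 <= P p q, forall q, \sum_p P p q = 1
    & forall p, \sum_q P p q = 1].

Lemma probvec_gt0 n (t : 'I_n -> R) : probvec t -> (0 < n)%N.
Proof. by case: n t => // t [_]; rewrite big_ord0 => /esym/eqP; rewrite oner_eq0. Qed.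

Lemma sumr_expR_gt0 n (a : 'I_n -> R) : (0 < n)%N -> 0 < \sum_p expR (a p).
Proof.
case: n a => // n a _; rewrite big_ord_recl ltr_pwDl ?expR_gt0 //.
by apply: sumr_ge0 => p _; exact/ltW/expR_gt0.
Qed.

Lemma ln_le_subr1 (x : R) : 0 < x -> ln x <= x - 1.
Proof. by move=> x0; have := @le_ln1Dx R (x - 1); rewrite subrKC; apply; lra. Qed.

Lemma shannon_ge0 n (t : 'I_n -> R) : probvec t -> 0 <= shannon t.
Proof.
move=> [t0 t1]; rewrite oppr_ge0; apply: sumr_le0 => a _.
rewrite mulr_ge0_le0 ?t0 // ln_le0 // -t1 (bigD1 a) //= lerDl.
by apply: sumr_ge0 => q _.
Qed.

Lemma shannon_mul m n (s : 'I_m -> R) (t : 'I_n -> R) : probvec s -> probvec t ->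
  - \sum_a \sum_b (s a * t b) * ln (s a * t b) = shannon s + shannon t.
Proof.
move=> [s0 s1] [t0 t1]; rewrite /shannon -opprD; congr (- _).
have xlnxM a b : (s a * t b) * ln (s a * t b) =
    (s a * t b) * ln (s a) + (s a * t b) * ln (t b).
  have [->|sa] := eqVneq (s a) 0; first by rewrite !mul0r !add0r.
  have [->|tb] := eqVneq (t b) 0; first by rewrite !mulr0 !mul0r addr0.
  by rewrite lnM ?posrE ?lt0r ?sa ?tb ?s0 ?t0 // mulrDr.
transitivity (\sum_a \sum_b (s a * t b) * ln (s a) +
              \sum_a \sum_b (s a * t b) * ln (t b)).
  rewrite -big_split; apply: eq_bigr => a _.
  by rewrite -big_split; apply: eq_bigr => b _; exact: xlnxM.
congr (_ + _).
- by apply: eq_bigr => a _; rewrite -mulr_suml -mulr_sumr t1 mulr1.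
- by rewrite exchange_big; apply: eq_bigr => b _; rewrite -!mulr_suml s1 mul1r.
Qed.

Lemma jensen_expR n (w x : 'I_n -> R) : probvec w ->
  expR (\sum_p w p * x p) <= \sum_p w p * expR (x p).
Proof.
move=> [w0 w1]; set m := \sum_p w p * x p.
have tangent p : expR m * (1 + (x p - m)) <= expR (x p).
  by have := expR_ge1Dx (x p - m); rewrite -(ler_pM2l (expR_gt0 m)) -expRD subrKC.
apply: le_trans (ler_sum _ (fun p _ => ler_wpM2l (w0 p) (tangent p))).
rewrite (eq_bigr (fun p => expR m * w p + expR m * (w p * x p) - expR m * m * w p));
  last by move=> p _; ring.
by rewrite !big_split /= sumrN -!mulr_sumr w1 -/m !mulr1 addrK.
Qed.

Lemma gibbs_variational n (s c : 'I_n -> R) : probvec s ->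
  shannon s - ln (\sum_q expR (- c q)) <= \sum_q s q * c q.
Proof.
move=> [s0 s1]; set Z := \sum_q expR (- c q).
have Z0 : 0 < Z by apply: sumr_expR_gt0; exact: probvec_gt0.
(* [ln y <= y - 1] at [y = e^(-c q) / (Z s q)], weighted by [s q] *)
have term q : s q - expR (- c q) / Z <= s q * (ln (s q) + c q + ln Z).
  have [->|sq0] := eqVneq (s q) 0.
    by rewrite mul0r sub0r oppr_le0 divr_ge0 ?expR_ge0 ?ltW.
  have sq : 0 < s q by rewrite lt0r sq0 s0.
  have := ln_le_subr1 (divr_gt0 (expR_gt0 (- c q)) (mulr_gt0 Z0 sq)).
  rewrite ln_div ?posrE ?expR_gt0 ?mulr_gt0 // lnM ?posrE // expRK.
  have -> : expR (- c q) / Z = s q * (expR (- c q) / (Z * s q)).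
    by field; rewrite ?gt_eqF.
  set y := expR (- c q) / (Z * s q) => h.
  nra.
have : 0 <= \sum_q s q * (ln (s q) + c q + ln Z).
  apply: le_trans (ler_sum _ (fun q _ => term q)).
  by rewrite sumrB -mulr_suml -/Z s1 mulfV ?gt_eqF // subrr.
under eq_bigr do rewrite !mulrDr.
by rewrite /shannon !big_split /= -mulr_suml s1 mul1r; lra.
Qed.

Lemma bistochastic_gibbs_variational n (P : 'I_n -> 'I_n -> R) (a s : 'I_n -> R)
    (b : R) : 0 < b -> bistochastic P -> probvec s ->
  shannon s - log_partition b a <= b * \sum_p \sum_q a p * s q * P p q.
Proof.
move=> b0 [P0 Pc Pr] sP; have n0 := probvec_gt0 sP.
pose c q := b * \sum_p P p q * a p.
have Zle : \sum_q expR (- c q) <= \sum_p expR (- b * a p).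
  have -> : \sum_p expR (- b * a p) = \sum_q \sum_p P p q * expR (- b * a p).
    by rewrite exchange_big; apply: eq_bigr => p _; rewrite -mulr_suml Pr mul1r.
  apply: ler_sum => q _; rewrite (_ : - c q = \sum_p P p q * (- b * a p)).
    by apply: jensen_expR; split.
  by rewrite /c mulr_sumr -sumrN; apply: eq_bigr => p _; ring.
apply: le_trans (_ : shannon s - ln (\sum_q expR (- c q)) <= _).
  by rewrite lerD2l lerN2 ler_ln ?posrE ?sumr_expR_gt0.
have -> : b * \sum_p \sum_q a p * s q * P p q = \sum_q s q * c q.
  rewrite exchange_big mulr_sumr; apply: eq_bigr => q _.
  by rewrite /c !mulr_sumr; apply: eq_bigr => p _; ring.
exact: gibbs_variational.
Qed.

Definition gibbs_weights n (b : R) (a : 'I_n -> R) (p : 'I_n) : R :=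
  expR (- b * a p) / \sum_q expR (- b * a q).

Lemma shannon_gibbs_weights n (b : R) (a : 'I_n -> R) :
  shannon (gibbs_weights b a) =
  b * \sum_p a p * gibbs_weights b a p + log_partition b a.
Proof.
case: n a => [|n] a.
  by rewrite /shannon /log_partition !big_ord0 ln0 // mulr0 oppr0 addr0.
set Z := \sum_q expR (- b * a q); have Z0 : 0 < Z by exact: sumr_expR_gt0.
have G1 : \sum_p gibbs_weights b a p = 1 by rewrite -mulr_suml mulfV ?gt_eqF.
have lnG p : ln (gibbs_weights b a p) = - b * a p - ln Z.
  by rewrite ln_div ?posrE ?expR_gt0 // expRK.
rewrite /shannon /log_partition -/Z -[ln Z]mul1r -G1 mulr_suml mulr_sumr -sumrN.
rewrite -big_split /=.
by apply: eq_bigr => p _; rewrite lnG; ring.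
Qed.

End Distributions.

Section UnitaryConjugation.
Variable C : numClosedFieldType.

Lemma trmxC_mul m n p (A : 'M[C]_(m, n)) (B : 'M[C]_(n, p)) :
  (A *m B)^t* = B^t* *m A^t*.
Proof. by rewrite trmx_mul map_mxM. Qed.

Lemma unitarymx_tC_mul n (V : 'M[C]_n) : V \is unitarymx -> V^t* *m V = 1%:M.
Proof. by rewrite -trmxC_unitary => /unitarymxP; rewrite trmxCK. Qed.

Lemma mxtrace_conj n (W X : 'M[C]_n) : W \in unitmx ->
  \tr (invmx W *m X *m W) = \tr X.
Proof. by move=> Wu; rewrite mxtrace_mulC mulmxA mulmxV // mul1mx. Qed.

Lemma mxtrace_conj_diag_mul n (W : 'M[C]_n) (a b : 'rV[C]_n) : W \in unitmx ->
  \tr ((invmx W *m diag_mx a *m W) *m (invmx W *m diag_mx b *m W)) =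
  \sum_i a 0 i * b 0 i.
Proof.
move=> Wu; rewrite !mulmxA -[invmx W *m _ *m W *m invmx W]mulmxA mulmxV // mulmx1.
rewrite -[invmx W *m _ *m diag_mx b]mulmxA mulmx_diag mxtrace_conj // mxtrace_diag.
by apply: eq_bigr => i _; rewrite mxE.
Qed.

Lemma mulmx_tC_entry n (W A : 'M[C]_n) a :
  (W *m A *m W^t*) a a = (row a W *m A *m (row a W)^t*) 0 0.
Proof.
rewrite !mxE; apply: eq_bigr => l _; rewrite !mxE; congr (_ * _).
by apply: eq_bigr => k _; rewrite !mxE.
Qed.

Lemma unitarymx_sandwich n (X U Y : 'M[C]_n) : X \is unitarymx ->
  U \is unitarymx -> Y \is unitarymx -> X *m U *m Y^t* \is unitarymx.
Proof. by move=> Xu Uu Yu; rewrite !mul_unitarymx ?trmxC_unitary. Qed.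

Lemma mxtrace_conj_sandwich n (X Y U : 'M[C]_n) (e t : 'rV[C]_n) :
  X \is unitarymx -> let M := X *m U *m Y^t* in
  \tr ((X^t* *m diag_mx e *m X) *m (U *m (Y^t* *m diag_mx t *m Y) *m U^t*)) =
  \sum_p \sum_q e 0 p * t 0 q * (M p q * (M p q)^*).
Proof.
move=> Xu M.
have -> : X^t* *m diag_mx e *m X *m (U *m (Y^t* *m diag_mx t *m Y) *m U^t*) =
    X^t* *m (diag_mx e *m M *m diag_mx t *m M^t*) *m X.
  rewrite /M !trmxC_mul trmxCK !mulmxA.
  by rewrite -[_ *m X^t* *m X]mulmxA unitarymx_tC_mul // mulmx1.
rewrite mxtrace_mulC [X *m (_ *m _)]mulmxA (unitarymxP Xu) mul1mx.
apply: eq_bigr => p _; rewrite mxE; apply: eq_bigr => q _.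
by rewrite mul_mx_diag mul_diag_mx !mxE; ring.
Qed.

End UnitaryConjugation.

Section ComplexMatrices.
Variable R : realType.
Local Notation C := R[i].

Lemma ge0_Re (w : C) : 0 <= w -> w = (complex.Re w)%:C%C /\ 0 <= complex.Re w.
Proof.
case: w => a b w0; have /= b0 := ger0_Im w0; subst b.
by split => //; move: w0; rewrite lecE /= => /andP[].
Qed.

Lemma unitarymx_bistochastic n (M : 'M[C]_n) : M \is unitarymx ->
  bistochastic (fun p q => complex.Re (M p q * (M p q)^*)).
Proof.
move=> Mu; split.
- by move=> p q; exact/(ge0_Re (mul_conjC_ge0 _)).2.
- move=> q; rewrite -raddf_sum -[RHS]/(complex.Re (1 : C)); congr complex.Re.
  have /matrixP /(_ q q) := unitarymx_tC_mul Mu; rewrite !mxE eqxx mulr1n => <-.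
  by apply: eq_bigr => p _; rewrite !mxE mulrC.
- move=> p; rewrite -raddf_sum -[RHS]/(complex.Re (1 : C)); congr complex.Re.
  have /matrixP /(_ p p) := unitarymxP Mu; rewrite !mxE eqxx mulr1n => <-.
  by apply: eq_bigr => q _; rewrite !mxE.
Qed.

Lemma Re_mul_real (z : C) (r : R) : complex.Re (z * r%:C%C) = complex.Re z * r.
Proof. by case: z => a b; rewrite /= mulr0 subr0. Qed.

Definition liftC (f : R -> R) (z : C) : C := (f (complex.Re z))%:C%C.

Lemma mxfun_conj_diag f n (A W : 'M[C]_n) (w : 'rV[C]_n) : A \is normalmx ->
  W \in unitmx -> A = invmx W *m diag_mx w *m W ->
  mxfun f A = invmx W *m diag_mx (map_mx (liftC f) w) *m W.
Proof.
move=> /orthomx_spectralP hA Wu eA.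
set P := spectralmx A in hA *; set D := spectral_diag A in hA *.
have Pu : P \in unitmx by exact: spectral_unit.
rewrite /mxfun -/P -/D -/(liftC f).
set M := P *m invmx W.
have DM : diag_mx D *m M = M *m diag_mx w.
  have : P *m A *m invmx W = P *m A *m invmx W by [].
  rewrite {1}hA eA !mulmxA mulmxV // mul1mx.
  by rewrite -!mulmxA mulmxV // mulmx1 !mulmxA.
have eP : invmx W = invmx P *m M by rewrite /M mulmxA mulVmx // mul1mx.
have MW : M *m W = P by rewrite /M -mulmxA mulVmx // mulmx1.
clearbody M.
(* [M] intertwines the two diagonal forms, so it only links equal eigenvalues *)
have fDM : diag_mx (map_mx (liftC f) D) *m M = M *m diag_mx (map_mx (liftC f) w).
  apply/matrixP => i j; move/matrixP: DM => /(_ i j).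
  rewrite !mul_diag_mx !mul_mx_diag !mxE.
  have [->|Mij] := eqVneq (M i j) 0; first by rewrite !(mulr0, mul0r).
  by rewrite [M i j * _]mulrC => /(mulIf Mij) ->; rewrite mulrC.
by rewrite eP -!mulmxA; congr (_ *m _); rewrite !mulmxA -fDM -!mulmxA MW.
Qed.

Lemma vN_entropy_conj_diag n (A W : 'M[C]_n) (x : 'I_n -> R) : W \is unitarymx ->
  A = invmx W *m diag_mx (\row_a (x a)%:C%C) *m W -> vN_entropy A = shannon x.
Proof.
move=> Wu eA; have Wun := unitarymx_unit Wu.
have An : A \is normalmx by apply/orthomx_spectral_subproof; exists (W, \row_a (x a)%:C%C).
rewrite /vN_entropy (mxfun_conj_diag _ An Wun eA) {1}eA mxtrace_conj_diag_mul //.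
rewrite raddf_sum /shannon; congr (- _); apply: eq_bigr => a _.
by rewrite !mxE /liftC /= mulr0 subr0.
Qed.

Definition spectral_re n (A : 'M[C]_n) (a : 'I_n) : R :=
  complex.Re (spectral_diag A 0 a).

Lemma density_spectral n (rh : 'M[C]_n) : density rh ->
  [/\ rh = (spectralmx rh)^t* *m diag_mx (\row_a (spectral_re rh a)%:C%C) *m spectralmx rh,
      probvec (spectral_re rh) & vN_entropy rh = shannon (spectral_re rh)].
Proof.
move=> [[hH psd] tr1].
set W := spectralmx rh; set sd := spectral_diag rh.
have Wu : W \is unitarymx by exact: spectral_unitarymx.
have Wun : W \in unitmx by exact: spectral_unit.
have hr : rh = invmx W *m diag_mx sd *m W.
  exact/orthomx_spectralP/hermitian_normalmx.
have sd0 a : 0 <= sd 0 a.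
  have : W *m rh *m W^t* = diag_mx sd.
    by rewrite hr invmx_unitary // !mulmxA (unitarymxP Wu) mul1mx mulmxtVK.
  move/matrixP/(_ a a); rewrite mulmx_tC_entry [diag_mx _ _ _]mxE eqxx mulr1n => <-.
  exact: psd.
have sdE : sd = \row_a (spectral_re rh a)%:C%C.
  by apply/rowP => a; rewrite mxE; exact: (ge0_Re (sd0 a)).1.
rewrite sdE -(invmx_unitary Wu) in hr *; split => //; last exact: vN_entropy_conj_diag hr.
split; first by move=> a; exact: (ge0_Re (sd0 a)).2.
rewrite -[RHS]/(complex.Re (1 : C)) -tr1 [in RHS]hr mxtrace_conj // mxtrace_diag raddf_sum.
by apply: eq_bigr => a _; rewrite mxE.
Qed.

Lemma gibbs_spectral b n (H : 'M[C]_n) :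
  gibbs b H = invmx (spectralmx H) *m
    diag_mx (\row_a (gibbs_weights b (spectral_re H) a)%:C%C) *m spectralmx H.
Proof.
set V := spectralmx H; have Vu : V \in unitmx by exact: spectral_unit.
rewrite /gibbs; set E := mxfun _ H; set Z := \sum_q expR (- b * spectral_re H q).
have trE : \tr E = Z%:C%C.
  by rewrite mxtrace_conj // mxtrace_diag rmorph_sum; apply: eq_bigr => a _; rewrite mxE.
rewrite trE scalemxAl scalemxAr; congr (_ *m _ *m _).
apply/matrixP => i j; rewrite !mxE mulrnAr; congr (_ *+ _).
by rewrite -fmorphV -rmorphM mulrC.
Qed.

Lemma gibbs_energy b n (H : 'M[C]_n) : H \is hermsymmx ->
  b * complex.Re (\tr (H *m gibbs b H)) =
  vN_entropy (gibbs b H) - log_partition b (spectral_re H).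
Proof.
move=> hH; set V := spectralmx H; have Vu := spectral_unitarymx H.
have hV : H = invmx V *m diag_mx (spectral_diag H) *m V.
  exact/orthomx_spectralP/hermitian_normalmx.
have hG := gibbs_spectral b H.
rewrite (vN_entropy_conj_diag Vu hG) shannon_gibbs_weights addrK; congr (b * _).
rewrite hG {1}hV mxtrace_conj_diag_mul ?unitarymx_unit // raddf_sum.
by apply: eq_bigr => a _; rewrite mxE; exact: Re_mul_real.
Qed.

Lemma energy_ge_shannon n (Hn rh X Y U : 'M[C]_n) (e : 'rV[C]_n) (t : 'I_n -> R)
    (b : R) : 0 < b -> X \is unitarymx -> U \is unitarymx -> Y \is unitarymx ->
  Hn = X^t* *m diag_mx e *m X ->
  rh = Y^t* *m diag_mx (\row_q (t q)%:C%C) *m Y -> probvec t ->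
  shannon t - log_partition b (fun p => complex.Re (e 0 p)) <= b * energy Hn rh U.
Proof.
move=> b0 Xu Uu Yu -> -> tP; have Mu := unitarymx_sandwich Xu Uu Yu.
rewrite /energy mxtrace_conj_sandwich //; set M := X *m U *m Y^t* in Mu *.
have -> : complex.Re (\sum_p \sum_q e 0 p * (\row_q (t q)%:C%C) 0 q * (M p q * (M p q)^*)) =
    \sum_p \sum_q complex.Re (e 0 p) * t q * complex.Re (M p q * (M p q)^*).
  rewrite raddf_sum; apply: eq_bigr => p _; rewrite raddf_sum; apply: eq_bigr => q _.
  rewrite mxE (ge0_Re (mul_conjC_ge0 (M p q))).1.
  by case: (e 0 p) => a c /=; ring.
exact: bistochastic_gibbs_variational b0 (unitarymx_bistochastic Mu) tP.
Qed.

Lemma passive_energy_ge n (Hn rh : 'M[C]_n) (L : R) :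
  (forall U, U \is unitarymx -> L <= energy Hn rh U) -> L <= passive_energy Hn rh.
Proof.
move=> h; apply: lb_le_inf; last by move=> _ [U /= Uu <-]; exact: h.
exists (energy Hn rh 1%:M), 1%:M => //=.
by apply/unitarymxP; rewrite trmx1 map_mx1 mulmx1.
Qed.

End ComplexMatrices.

Section TensorPowers.
Variable R : realType.
Local Notation C := R[i].
Variable d : nat.

Lemma castmx_mulmx m m' (e : m = m') (A B : 'M[C]_m) :
  castmx (e, e) A *m castmx (e, e) B = castmx (e, e) (A *m B).
Proof. by case: m' / e. Qed.

Lemma castmx1 m m' (e : m = m') : castmx (e, e) (1%:M : 'M[C]_m) = 1%:M.
Proof. by case: m' / e. Qed.

Lemma castmx_tC m m' (e : m = m') (A : 'M[C]_m) :
  (castmx (e, e) A)^t* = castmx (e, e) (A^t*).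
Proof. by case: m' / e. Qed.

Lemma tensmx_tC m n p q (A : 'M[C]_(m, n)) (B : 'M[C]_(p, q)) :
  (A *t B)^t* = A^t* *t B^t*.
Proof. by rewrite trmx_tens map_mxT. Qed.

Lemma tensmx11 m n : (1%:M : 'M[C]_m) *t (1%:M : 'M[C]_n) = 1%:M.
Proof.
apply/matrixP => i j.
case: (mxtens_indexP i) => a b; case: (mxtens_indexP j) => a' b'.
rewrite tensmxE !mxE (can_eq (@mxtens_indexK m n)) xpair_eqE.
by case: (a == a'); case: (b == b'); rewrite ?mulr1n ?mulr0n ?mulr1 ?mulr0.
Qed.

Lemma tensS N (F : nat -> 'M[C]_d) : tens N.+1 F =
  castmx (esym (expnS d N), esym (expnS d N)) (F 0%N *t tens N (fun i => F i.+1)).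
Proof. by []. Qed.

Lemma eq_tens N (F G : nat -> 'M[C]_d) : (forall i, (i < N)%N -> F i = G i) ->
  tens N F = tens N G.
Proof.
elim: N F G => [//|N IH] F G FG; rewrite !tensS FG //.
by rewrite (IH (fun i => F i.+1) (fun i => G i.+1)) // => i iN; apply: FG.
Qed.

Lemma tens_mul N (F G : nat -> 'M[C]_d) :
  tens N F *m tens N G = tens N (fun i => F i *m G i).
Proof.
elim: N F G => [|N IH] F G; first by rewrite /= mulmx1.
by rewrite !tensS castmx_mulmx tensmx_mul IH.
Qed.

Lemma tens1 N : tens N (fun _ => (1%:M : 'M[C]_d)) = 1%:M.
Proof. by elim: N => [//|N IH]; rewrite tensS IH tensmx11 castmx1. Qed.

Lemma tens_tC N (F : nat -> 'M[C]_d) :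
  (tens N F)^t* = tens N (fun i => (F i)^t*).
Proof.
elim: N F => [|N IH] F; first by rewrite /= trmx1 map_mx1.
by rewrite !tensS castmx_tC tensmx_tC IH.
Qed.

Lemma tens_unitary N (F : nat -> 'M[C]_d) :
  (forall i, (i < N)%N -> F i \is unitarymx) -> tens N F \is unitarymx.
Proof.
move=> Fu; apply/unitarymxP; rewrite tens_tC tens_mul (@eq_tens _ _ (fun=> 1%:M)) ?tens1 //.
by move=> i iN; exact/unitarymxP/Fu.
Qed.

Definition tens_index N (a : 'I_d) (b : 'I_(d ^ N)) : 'I_(d ^ N.+1) :=
  cast_ord (esym (expnS d N)) (mxtens_index (a, b)).

Definition tens_unindex N (q : 'I_(d ^ N.+1)) : 'I_d * 'I_(d ^ N) :=
  mxtens_unindex (cast_ord (expnS d N) q).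

Lemma tens_indexK N a b : tens_unindex (@tens_index N a b) = (a, b).
Proof.
rewrite /tens_unindex.
have -> : cast_ord (expnS d N) (tens_index a b) = mxtens_index (a, b) by exact: val_inj.
exact: mxtens_indexK.
Qed.

Lemma tens_unindexK N q :
  @tens_index N (tens_unindex q).1 (tens_unindex q).2 = q.
Proof. by rewrite /tens_index -surjective_pairing mxtens_unindexK; exact: val_inj. Qed.

Lemma eq_tens_index N a b a' b' :
  (@tens_index N a b == tens_index a' b') = (a == a') && (b == b').
Proof.
by rewrite (can_eq (@cast_ordK _ _ _)) (can_eq (@mxtens_indexK _ _)) xpair_eqE.
Qed.

Lemma sum_tens_index (V : nmodType) N (F : 'I_(d ^ N.+1) -> V) :
  \sum_q F q = \sum_a \sum_b F (@tens_index N a b).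
Proof.
rewrite pair_big (reindex (fun ab => tens_index ab.1 ab.2)) //=.
exists (@tens_unindex N) => [[a b] _|q _]; first by rewrite tens_indexK.
exact: tens_unindexK.
Qed.

Lemma tens_index_entry N (F : nat -> 'M[C]_d) a b a' b' :
  tens N.+1 F (tens_index a b) (tens_index a' b') =
  F 0%N a a' * tens N (fun i => F i.+1) b b'.
Proof. by rewrite tensS castmxE !cast_ordK tensmxE. Qed.

Lemma tens_diag_probvec N (F : nat -> 'M[C]_d) (x : nat -> 'I_d -> R) :
  (forall j, (j < N)%N -> F j = diag_mx (\row_a (x j a)%:C%C) /\ probvec (x j)) ->
  exists2 t : 'I_(d ^ N) -> R, tens N F = diag_mx (\row_q (t q)%:C%C) &
    probvec t /\ shannon t = \sum_(j < N) shannon (x j).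
Proof.
elim: N F x => [|N IH] F x Fx.
  exists (fun=> 1); first by apply/matrixP => i j; rewrite !mxE.
  split; first by split=> [//|]; rewrite big_ord1.
  by rewrite /shannon big_ord0 big_ord1 ln1 mulr0 oppr0.
have [t Ft [tP tS]] := IH (fun j => F j.+1) (fun j => x j.+1) (fun j jN => Fx j.+1 jN).
have [F0 x0P] := Fx 0%N isT.
exists (fun q => x 0%N (tens_unindex q).1 * t (tens_unindex q).2).
  apply/matrixP => q q'; rewrite -[q]tens_unindexK -[q']tens_unindexK.
  case: (tens_unindex q) (tens_unindex q') => a b [a' b'].
  rewrite tens_index_entry F0 Ft !mxE eq_tens_index tens_indexK /=.
  by case: (a == a'); case: (b == b'); rewrite ?mulr1n ?mulr0n ?mulr0 ?mul0r ?rmorphM.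
split.
  split=> [q|]; first by apply: mulr_ge0; [case: x0P | case: tP].
  rewrite sum_tens_index -[RHS](proj2 x0P); apply: eq_bigr => a _.
  by rewrite -[RHS]mulr1 -(proj2 tP) mulr_sumr; apply: eq_bigr => b _; rewrite tens_indexK.
rewrite big_ord_recl -tS -shannon_mul // /shannon sum_tens_index.
by congr (- _); apply: eq_bigr => a _; apply: eq_bigr => b _; rewrite tens_indexK.
Qed.

Lemma local_ham_index N (D : 'M[C]_d) a b a' b' :
  local_ham N.+1 D (tens_index a b) (tens_index a' b') =
  D a a' * (b == b')%:R + (a == a')%:R * local_ham N D b b'.
Proof.
rewrite /local_ham !summxE big_ord_recl; congr (_ + _).
  by rewrite (tens_index_entry (fun i => if i == ord0 then D else 1%:M)) /= tens1 mxE.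
rewrite mulr_sumr; apply: eq_bigr => j _.
rewrite (tens_index_entry (fun i => if i == lift ord0 j then D else 1%:M)) /=.
by rewrite [1%:M a a']mxE.
Qed.

Lemma local_ham_diag_is_diag N (u : 'rV[C]_d) : is_diag_mx (local_ham N (diag_mx u)).
Proof.
elim: N => [|N /diag_mxP[e IH]]; first by rewrite /local_ham big_ord0 mx0_is_diag.
apply/is_diag_mxP => q q' neq; have : q != q' by apply: contraNneq neq => ->.
rewrite -[q]tens_unindexK -[q']tens_unindexK eq_tens_index negb_and local_ham_index.
case: (tens_unindex q) (tens_unindex q') => a b [a' b'] /= /orP[aa'|bb'].
  by rewrite [diag_mx u a a']mxE (negbTE aa') !mulr0n !mul0r addr0.
by rewrite IH !mxE (negbTE bb') !mulr0n !mulr0 addr0.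
Qed.

Lemma sum_expR_local_ham_diag N (u : 'rV[C]_d) (b : R) :
  \sum_q expR (- b * complex.Re (local_ham N (diag_mx u) q q)) =
  (\sum_a expR (- b * complex.Re (u 0 a))) ^+ N.
Proof.
elim: N => [|N IH]; first by rewrite big_ord1 /local_ham big_ord0 mxE mulr0 expR0.
rewrite sum_tens_index exprS -IH mulr_suml; apply: eq_bigr => a _.
rewrite mulr_sumr; apply: eq_bigr => c _.
by rewrite local_ham_index !eqxx mulr1 mul1r mxE eqxx mulr1n raddfD /= mulrDr expRD.
Qed.

Lemma local_ham_conj N (D V : 'M[C]_d) : V \is unitarymx ->
  local_ham N (V^t* *m D *m V) =
  (tens N (fun=> V))^t* *m local_ham N D *m tens N (fun=> V).
Proof.
move=> Vu; rewrite /local_ham mulmx_sumr mulmx_suml; apply: eq_bigr => j _.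
rewrite tens_tC !tens_mul; apply: eq_tens => i _.
by case: (i == j); rewrite // mulmx1 unitarymx_tC_mul.
Qed.

End TensorPowers.

Section FactorSequence.
Variable R : realType.
Local Notation C := R[i].
Variables (d k : nat) (p : 'I_k -> R) (rho : 'I_k -> 'M[C]_d) (N : nat).

Lemma mem_factor_seq x : x \in factor_seq p rho N -> exists i, x = rho i.
Proof. by move/flattenP => [s /mapP [i _ ->] /nseqP [-> _]]; exists i. Qed.

Lemma sum_factor_seq (V : nmodType) (F : 'M[C]_d -> V) :
  \sum_(x <- factor_seq p rho N) F x = \sum_i F (rho i) *+ ncopies p N i.
Proof.
rewrite /factor_seq big_flatten /= big_map big_enum /=.
by apply: eq_bigr => i _; rewrite big_nseq iter_addr_0.
Qed.

Lemma size_factor_seq : size (factor_seq p rho N) = (\sum_i ncopies p N i)%N.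
Proof.
rewrite -sum1_size /factor_seq big_flatten /= big_map big_enum /=.
by apply: eq_bigr => i _; rewrite big_nseq iter_addn_0 mul1n.
Qed.

End FactorSequence.

Section Copies.
Variable R : realType.
Variables (k : nat) (p : 'I_k.+1 -> R) (N : nat).
Hypotheses (p0 : forall i, 0 <= p i) (p1 : \sum_i p i = 1).

Let S := (\sum_(l < k.+1 | (0 < val l)%N) Num.truncn (p l * N%:R))%N.

Let ncopies0 : ncopies p N ord0 = (N - S)%N.
Proof. by []. Qed.

Let S_le : (S%:R : R) <= (1 - p ord0) * N%:R.
Proof.
have -> : 1 - p ord0 = \sum_(i < k) p (lift ord0 i) by rewrite -p1 big_ord_recl addrC addKr.
rewrite /S big_mkcond big_ord_recl /= add0n natr_sum mulr_suml.
by apply: ler_sum => i _; rewrite truncn_le mulr_ge0.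
Qed.

Let S_leN : (S <= N)%N.
Proof.
rewrite -(ler_nat R); apply: le_trans S_le _; rewrite ler_piMl //.
by rewrite lerBlDr lerDl.
Qed.

Lemma sum_ncopies : (\sum_i ncopies p N i)%N = N.
Proof.
rewrite big_ord_recl ncopies0 -[X in (_ + X)%N](_ : S = _) ?subnK //.
by rewrite /S big_mkcond big_ord_recl.
Qed.

Lemma ncopies_ge i : p i * N%:R - 1 <= (ncopies p N i)%:R.
Proof.
have [->|i0] := eqVneq i ord0.
  by rewrite ncopies0 natrB //; move: S_le; lra.
have -> : ncopies p N i = Num.truncn (p i * N%:R).
  by rewrite /ncopies ifF //; apply: contraNF i0 => /eqP v0; apply/eqP/val_inj.
by have := truncnS_gt (p i * N%:R); rewrite -addn1 natrD; lra.
Qed.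

End Copies.

Section ManyCopies.
Variable R : realType.
Local Notation C := R[i].
Variable d : nat.

Lemma local_ham_spectral N (H : 'M[C]_d) (b : R) : (0 < d)%N -> H \is hermsymmx ->
  exists X (e : 'rV[C]_(d ^ N)), [/\ X \is unitarymx,
    local_ham N H = X^t* *m diag_mx e *m X &
    log_partition b (fun q => complex.Re (e 0 q)) =
      N%:R * log_partition b (spectral_re H)].
Proof.
move=> d0 hH; set V := spectralmx H; set u := spectral_diag H.
have Vu : V \is unitarymx by exact: spectral_unitarymx.
have hV : H = V^t* *m diag_mx u *m V.
  rewrite -(invmx_unitary Vu); exact/orthomx_spectralP/hermitian_normalmx.
have /diag_mxP[e He] := local_ham_diag_is_diag N u.
exists (tens N (fun=> V)), e; split; first exact: tens_unitary.
  by rewrite {1}hV local_ham_conj // He.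
have := sum_expR_local_ham_diag N u b; rewrite He.
under eq_bigr do rewrite mxE eqxx mulr1n.
by rewrite /log_partition => ->; rewrite lnXn ?sumr_expR_gt0 // mulr_natl.
Qed.

Lemma rhoN_spectral k (p : 'I_k -> R) (rho : 'I_k -> 'M[C]_d) N :
  (forall i, density (rho i)) -> size (factor_seq p rho N) = N ->
  exists Y (t : 'I_(d ^ N) -> R), [/\ Y \is unitarymx,
    rhoN p rho N = Y^t* *m diag_mx (\row_q (t q)%:C%C) *m Y, probvec t &
    shannon t = \sum_i (ncopies p N i)%:R * vN_entropy (rho i)].
Proof.
move=> dens sizeN; pose F j := nth 0 (factor_seq p rho N) j.
have densF j : (j < N)%N -> density (F j).
  move=> jN; have : F j \in factor_seq p rho N by apply: mem_nth; rewrite sizeN.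
  by case/mem_factor_seq => i ->.
pose W j := spectralmx (F j).
have [t Dt [tP tS]] := @tens_diag_probvec R d N
  (fun j => diag_mx (\row_a (spectral_re (F j) a)%:C%C)) (fun j => spectral_re (F j))
  (fun j jN => let: And3 _ h _ := density_spectral (densF j jN) in conj erefl h).
exists (tens N W), t; split.
- by apply: tens_unitary => j _; exact: spectral_unitarymx.
- rewrite -Dt tens_tC !tens_mul /rhoN; apply: eq_tens => j jN.
  by have [] := density_spectral (densF j jN).
- exact: tP.
rewrite tS (eq_bigr (fun j : 'I_N => vN_entropy (F j))); last first.
  by move=> j _; have [_ _ ->] := density_spectral (densF j (ltn_ord j)).
have := sum_factor_seq p rho N (@vN_entropy R d).
rewrite (big_nth 0) big_mkord sizeN => ->.
by apply: eq_bigr => i _; rewrite mulr_natl.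
Qed.

Lemma passive_energy_ge_entropy (H : 'M[C]_d) k (p : 'I_k -> R)
    (rho : 'I_k -> 'M[C]_d) (b : R) N :
  (0 < d)%N -> H \is hermsymmx -> 0 < b -> (forall i, density (rho i)) ->
  size (factor_seq p rho N) = N ->
  (\sum_i (ncopies p N i)%:R * vN_entropy (rho i) -
    N%:R * log_partition b (spectral_re H)) / b
  <= passive_energy (local_ham N H) (rhoN p rho N).
Proof.
move=> d0 hH b0 dens sizeN.
have [X [e [Xu He Ze]]] := local_ham_spectral N b d0 hH.
have [Y [t [Yu Dt tP tS]]] := rhoN_spectral dens sizeN.
apply: passive_energy_ge => U Uu; rewrite ler_pdivrMr // [_ * b]mulrC -tS -Ze.
exact: energy_ge_shannon b0 Xu Uu Yu He Dt tP.
Qed.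

End ManyCopies.

Lemma le_limn_einf_sub_div (R : realType) (a c : R) (u : nat -> R) :
  (forall N, (0 < N)%N -> a - c / N%:R <= u N) ->
  (a%:E <= limn_einf (fun N => (u N)%:E))%E.
Proof.
move=> hu; apply/lee_subgt0Pr => e e0.
rewrite limn_einf_lim; apply: lime_ge; first exact: is_cvg_einfs.
exists (Num.truncn (c / e)).+1 => // n /= hn.
apply: le_ereal_inf_tmp => _ [m /= nm <-].
have mM : ((Num.truncn (c / e)).+1 <= m)%N by exact: leq_trans hn nm.
have m0 : (0 < m)%N by exact: leq_trans _ mM.
rewrite lee_fin; apply: le_trans (hu m m0).
rewrite lerD2l lerN2 ler_pdivrMr ?ltr0n //.
have : c / e < m%:R.
  by apply: lt_le_trans (truncnS_gt _) _; rewrite ler_nat.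
by rewrite ltr_pdivrMr // mulrC => /ltW.
Qed.

Section Rate.
Variable R : realType.
Local Notation C := R[i].

Lemma vN_entropy_ge0 n (rh : 'M[C]_n) : density rh -> 0 <= vN_entropy rh.
Proof. by case/density_spectral => _ /shannon_ge0 + ->. Qed.

Lemma passive_energy_rate_ge d (H : 'M[C]_d) k (p : 'I_k.+1 -> R)
    (rho : 'I_k.+1 -> 'M[C]_d) (b : R) N :
  (0 < d)%N -> H \is hermsymmx -> 0 < b -> (forall i, 0 <= p i) ->
  \sum_i p i = 1 -> (forall i, density (rho i)) ->
  vN_entropy (gibbs b H) = \sum_i p i * vN_entropy (rho i) -> (0 < N)%N ->
  complex.Re (\tr (H *m gibbs b H)) - (\sum_i vN_entropy (rho i)) / b / N%:R <=
  N%:R^-1 * passive_energy (local_ham N H) (rhoN p rho N).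
Proof.
move=> d0 hH b0 p0 p1 dens hS N0.
set K := \sum_i vN_entropy (rho i).
have sizeN : size (factor_seq p rho N) = N by rewrite size_factor_seq sum_ncopies.
have hb := passive_energy_ge_entropy d0 hH b0 dens sizeN.
have hG := gibbs_energy b hH.
have copies : N%:R * vN_entropy (gibbs b H) - K <=
    \sum_i (ncopies p N i)%:R * vN_entropy (rho i).
  rewrite hS mulr_sumr /K -sumrB; apply: ler_sum => i _.
  rewrite (_ : _ - _ = (p i * N%:R - 1) * vN_entropy (rho i)); last by ring.
  by apply: ler_wpM2r; [exact: vN_entropy_ge0 | exact: ncopies_ge].
have N0R : 0 < (N%:R : R) by rewrite ltr0n.
rewrite ler_pdivlMl //; apply: le_trans hb; rewrite ler_pdivlMr //.
rewrite (_ : _ * b = N%:R * (b * complex.Re (\tr (H *m gibbs b H))) - K).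
  by rewrite hG; lra.
by field; rewrite ?gt_eqF.
Qed.

End Rate.

Theorem mainTheorem6 (R : realType) (d : nat) (H : 'M[R[i]]_d)
  (k : nat) (p : 'I_k -> R) (rho : 'I_k -> 'M[R[i]]_d) (beta : R) :
  H \is hermsymmx ->
  (forall i, 0 <= p i) ->
  \sum_(i < k) p i = 1 ->
  (forall i, density (rho i)) ->
  0 < beta ->
  vN_entropy (gibbs beta H) = \sum_(i < k) p i * vN_entropy (rho i) ->
  ((complex.Re (\tr (H *m gibbs beta H)))%:E <=
    limn_einf (fun N : nat =>
      ((N%:R)^-1 * passive_energy (local_ham N H) (rhoN p rho N))%:E))%E.
Proof.
move=> hH p0 p1 dens b0 hS.
case: k p rho p0 p1 dens hS => [|k] p rho p0 p1 dens hS.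
  by move: p1; rewrite big_ord0 => /esym/eqP; rewrite oner_eq0.
have [_ /probvec_gt0 d0 _] := density_spectral (dens ord0).
apply: le_limn_einf_sub_div => N N0.
exact: passive_energy_rate_ge.
Qed.
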